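(* Let $(W,S)$ be a finite Coxeter system, let $\varphi:W\hookrightarrow\mathrm{Sym}(n)$ ($n\ge2$) be an E-embedding, and let $\alpha\in[\pi/4,\pi/2)$. Then for every $w\in W$ and every reduced expression $w=s_{i_1}s_{i_2}\cdots s_{i_\ell}$ ($s_{i_j}\in S$), $$\mathrm{B}^\alpha_\varphi(\mathrm{id})\prec\mathrm{B}^\alpha_\varphi(s_{i_1})\prec\mathrm{B}^\alpha_\varphi(s_{i_1}s_{i_2})\prec\cdots\prec\mathrm{B}^\alpha_\varphi(s_{i_1}\cdots s_{i_\ell}).$$
   Context: $(W,S)$ is a finite Coxeter system with length function $\ell$ and reflections $T=\{wsw^{-1}: w\in W,s\in S\}$. The right weak order $<_R$ is the transitive closure of $u<_R us$ for $s\in S$ with $\ell(us)=\ell(u)+1$. The Bruhat order $<_B$ is the transitive closure of $u<_B ut$ for $t\in T$ with $\ell(ut)=\ell(u)+1$. $\mathrm{Sym}(n)$, the permutations of $\{1,\dots,n\}$ written on the right ($(i)w$ is the image of $i$; $uv$ = first $u$ then $v$), is regarded as a Coxeter group with generators $(i,i+1)$ and reflections all transpositions. An E-embedding is an injective group homomorphism $\varphi:W\to\mathrm{Sym}(n)$ such that for all $u,v\in W$, $u<_R v$ implies $\varphi(u)<_B\varphi(v)$. Borders: for $\alpha\in(0,\pi/2)$ and $k=1,\dots,n$ let $\theta_k=\frac{(k-1)(\pi-2\alpha)}{n-1}+\alpha$ and $\beta^k_n=(-\cos\theta_k,\sin\theta_k)$. For $\sigma\in\mathrm{Sym}(n)$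 let $p_i(\sigma)=\sum_{j=1}^{i}\beta_n^{(j)\sigma^{-1}}$ ($i=0,\dots,n$) and let the border $\mathrm{B}^\alpha_n(\sigma)=\bigcup_{i=1}^n[p_{i-1}(\sigma),p_i(\sigma)]$ (a polygonal path). Its $y$-coordinate increases strictly from $0$ to $h^\alpha_n=\sum_k\sin\theta_k$; for $y\in[0,h^\alpha_n]$ let $\mathrm{H}(\mathrm{B}^\alpha_n(\sigma),y)$ be the $x$-coordinate of its unique point at height $y$. Write $\mathrm{B}^\alpha_n(\sigma)\prec\mathrm{B}^\alpha_n(\tau)$ if $\mathrm{H}(\mathrm{B}^\alpha_n(\sigma),y)\le\mathrm{H}(\mathrm{B}^\alpha_n(\tau),y)$ for all $y\in[0,h^\alpha_n]$. For an E-embedding $\varphi$ and $w\in W$ put $\mathrm{B}^\alpha_\varphi(w)=\mathrm{B}^\alpha_n(\varphi(w))$. *)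

From Stdlib Require Import Reals Relations.
From mathcomp Require Import all_boot all_fingroup.
Set Implicit Arguments. Unset Strict Implicit. Unset Printing Implicit Defensive.
Local Open Scope group_scope.

Section Coxeter.
Variable gT : finGroupType.

Definition wprod (s : seq gT) : gT := \prod_(x <- s) x.

Definition word_over (S : {set gT}) (s : seq gT) : bool := all (fun x => x \in S) s.

Definition cox_len (S : {set gT}) (w : gT) (k : nat) : Prop :=
  (exists s, [/\ word_over S s, wprod s = w & size s = k]) /\
  (forall s, word_over S s -> wprod s = w -> (k <= size s)%N).

Definition reduced_expr (S : {set gT}) (s : seq gT) (w : gT) : Prop :=
  [/\ word_over S s, wprod s = w & cox_len S w (size s)].

Definition reflections (W : {set gT}) (S : {set gT}) : {set gT} :=
  [set s ^ w | s in S, w in W].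

(* (W,S) is a (finite) Coxeter system: S consists of involutions generating W
   and W has the Coxeter presentation with m(s,t) = order of st, expressed by
   its universal property (tested against all finite groups). *)
Definition coxeter_system (W : {group gT}) (S : {set gT}) : Prop :=
  [/\ S \subset W, <<S>> = W, (forall s, s \in S -> #[s] = 2) &
      forall (hT : finGroupType) (f : gT -> hT),
        (forall s t, s \in S -> t \in S -> (f s * f t) ^+ #[s * t] = 1) ->
        exists g : {morphism W >-> hT}, forall s, s \in S -> g s = f s].

Definition weak_step (S : {set gT}) (u v : gT) : Prop :=
  exists2 s, s \in S & v = u * s /\ exists k, cox_len S u k /\ cox_len S v k.+1.

Definition weak_lt (S : {set gT}) : relation gT := clos_trans gT (weak_step S).

Definition bruhat_step (W S : {set gT}) (u v : gT) : Prop :=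
  exists2 t, t \in reflections W S &
    v = u * t /\ exists k, cox_len S u k /\ cox_len S v k.+1.

Definition bruhat_lt (W S : {set gT}) : relation gT :=
  clos_trans gT (bruhat_step W S).

End Coxeter.

(* Sym(n) realised as {perm 'I_n} (points 0..n-1 instead of 1..n); mathcomp
   composes permutations left to right ((s * t) x = t (s x)), as in the paper. *)
Definition sym_gens (n : nat) : {set {perm 'I_n}} :=
  [set t | [exists i : 'I_n, exists j : 'I_n, (nat_of_ord j == (nat_of_ord i).+1) && (t == tperm i j)]].

Definition sym_bruhat_lt (n : nat) : relation {perm 'I_n} :=
  bruhat_lt [set: {perm 'I_n}] (sym_gens n).

Definition E_embedding (gT : finGroupType) (W : {group gT}) (S : {set gT})
    (n : nat) (phi : {morphism W >-> {perm 'I_n}}) : Prop :=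
  'injm phi /\
  forall u v, u \in W -> v \in W -> weak_lt S u v -> sym_bruhat_lt (phi u) (phi v).

(* ---------- Borders (0-indexed: k = 0..n-1 stands for k+1) ---------- *)
Unset Implicit Arguments.
Local Open Scope R_scope.

Definition theta (n : nat) (alpha : R) (k : nat) : R :=
  INR k * (PI - 2 * alpha) / INR (n - 1) + alpha.

Definition beta (n : nat) (alpha : R) (k : nat) : R * R :=
  (- cos (theta n alpha k), sin (theta n alpha k)).

Definition bpt (n : nat) (alpha : R) (sigma : {perm 'I_n}) (i : nat) : R * R :=
  (\big[Rplus/0]_(j < n | (j < i)%N) fst (beta n alpha ((sigma^-1)%g j)),
   \big[Rplus/0]_(j < n | (j < i)%N) snd (beta n alpha ((sigma^-1)%g j))).

Definition on_border (n : nat) (alpha : R) (sigma : {perm 'I_n}) (x y : R) : Prop :=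
  exists (i : ordinal n) (l : R), 0 <= l <= 1 /\
    x = (1 - l) * fst (bpt n alpha sigma (nat_of_ord i)) + l * fst (bpt n alpha sigma (nat_of_ord i).+1) /\
    y = (1 - l) * snd (bpt n alpha sigma (nat_of_ord i)) + l * snd (bpt n alpha sigma (nat_of_ord i).+1).

Definition border_height (n : nat) (alpha : R) : R :=
  \big[Rplus/0]_(k < n) sin (theta n alpha k).

(* B(sigma) ≺ B(tau): at every height y in [0,h], H(B(sigma),y) <= H(B(tau),y),
   where H(B,y) is the x-coordinate of the (unique) point of B at height y. *)
Definition border_prec (n : nat) (alpha : R) (sigma tau : {perm 'I_n}) : Prop :=
  forall y, 0 <= y <= border_height n alpha ->
  forall x1 x2, on_border n alpha sigma x1 y -> on_border n alpha tau x2 y -> x1 <= x2.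

From HB Require Import structures.
From Stdlib Require Import Reals Relations Lra.
From mathcomp Require Import all_boot all_fingroup zify.

(* Consecutive prefixes of a reduced expression are covers u <_R us of the weak
   order, which the E-embedding sends to Bruhat chains in Sym(n).  A Bruhat step
   of Sym(n) is sigma |-> sigma (a b) with a < b; as the length of sigma is the
   number of inversions of sigma^-1, it satisfies sigma^-1 a < sigma^-1 b, so it
   exchanges the a-th and b-th edges of the border, of angles
   theta_A <= theta_B in [pi/4, 3pi/4].
   Since alpha >= pi/4, every edge satisfies |dx| <= dy: a border is a
   1-Lipschitz graph over the y-axis.  Hence B(sigma) lies left of B(tau) as soon
   as every point of B(tau) lies in the right cone {x >= x0 + |y - y0|} of some
   point (x0, y0) of B(sigma).  For an exchange this is checked edge by edge: the
   stretch between the two edges is translated by beta_B - beta_A, and the three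
   trigonometric inequalities for theta_A <= theta_B are exactly what the two
   moved edges and this translation need. *)

Set Implicit Arguments. Unset Strict Implicit. Unset Printing Implicit Defensive.

Local Open Scope R_scope.

Lemma sin_add_PI4 s : sin (s + PI / 4) = (sin s + cos s) * sin (PI / 4).
Proof. by rewrite sin_plus -sin_cos_PI4; ring. Qed.

Lemma sin_sub_PI4 s : sin (s - PI / 4) = (sin s - cos s) * sin (PI / 4).
Proof. by rewrite sin_minus -sin_cos_PI4; ring. Qed.

Lemma sin_PI4_gt0 : 0 < sin (PI / 4).
Proof. by apply: sin_gt_0; have := PI_RGT_0; lra. Qed.

Lemma sin_add_cos_decr A B : PI / 4 <= A -> A <= B -> B <= 3 * PI / 4 ->
  sin B + cos B <= sin A + cos A.
Proof.
move=> hA hAB hB; have hPI := PI_RGT_0.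
apply: (Rmult_le_reg_r _ _ _ sin_PI4_gt0); rewrite -!sin_add_PI4.
apply: sin_decr_1; lra.
Qed.

Lemma sin_sub_cos_incr A B : PI / 4 <= A -> A <= B -> B <= 3 * PI / 4 ->
  sin A - cos A <= sin B - cos B.
Proof.
move=> hA hAB hB; have hPI := PI_RGT_0.
apply: (Rmult_le_reg_r _ _ _ sin_PI4_gt0); rewrite -!sin_sub_PI4.
apply: sin_incr_1; lra.
Qed.

Lemma abs_cos_le_sin m : PI / 4 <= m <= 3 * PI / 4 -> Rabs (cos m) <= sin m.
Proof.
move=> [h1 h2]; have hPI := PI_RGT_0; have h4 := sin_PI4_gt0.
have hp : 0 <= sin (m + PI / 4) by apply: sin_ge_0; lra.
have hm : 0 <= sin (m - PI / 4) by apply: sin_ge_0; lra.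
rewrite sin_add_PI4 in hp; rewrite sin_sub_PI4 in hm.
apply: Rabs_le; nra.
Qed.

Lemma cos_sin_cross_le A B : 0 <= A -> A <= B -> B <= PI ->
  - cos A * sin B <= - cos B * sin A.
Proof. by move=> *; have := sin_ge_0 (B - A); rewrite sin_minus; lra. Qed.

Lemma Rplus_associative : associative Rplus.
Proof. by move=> x y z; rewrite Rplus_assoc. Qed.

HB.instance Definition _ :=
  Monoid.isComLaw.Build R R0 Rplus Rplus_associative Rplus_comm Rplus_0_l.

Lemma big_Rminus (I : finType) (P : pred I) (F G : I -> R) :
  \big[Rplus/0]_(i | P i) F i - \big[Rplus/0]_(i | P i) G i =
  \big[Rplus/0]_(i | P i) (F i - G i).
Proof.
by apply: (big_rec3 (fun x y z => x - y = z)) => [|i x y z _ <-]; lra.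
Qed.

Lemma Rabs_big_le (I : finType) (P : pred I) (F G : I -> R) :
  (forall i, P i -> Rabs (F i) <= G i) ->
  Rabs (\big[Rplus/0]_(i | P i) F i) <= \big[Rplus/0]_(i | P i) G i.
Proof.
move=> hFG; apply: (big_ind2 (fun x y => Rabs x <= y)) => //.
  by rewrite Rabs_R0; lra.
by move=> x1 x2 y1 y2 h1 h2; have := Rabs_triang x1 y1; lra.
Qed.

Lemma Rabs_le_between x b : Rabs x <= b -> - b <= x <= b.
Proof. by move=> h; have := Rle_abs x; have := Rle_abs (- x); rewrite Rabs_Ropp; lra. Qed.

Lemma Rdiv_in_unit x y : 0 < y -> 0 <= x <= y -> 0 <= x / y <= 1.
Proof.
move=> hy hx; split; first by apply: Rle_mult_inv_pos; lra.
by apply: (Rmult_le_reg_r y); rewrite // Rmult_1_l /Rdiv Rmult_assoc Rinv_l; lra.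
Qed.

Definition clamp01 (z : R) : R := Rmin 1 (Rmax 0 z).

Lemma clamp01_le0 z : z <= 0 -> clamp01 z = 0.
Proof. by rewrite /clamp01 /Rmin /Rmax; repeat destruct Rle_dec; lra. Qed.

Lemma clamp01_ge1 z : 1 <= z -> clamp01 z = 1.
Proof. by rewrite /clamp01 /Rmin /Rmax; repeat destruct Rle_dec; lra. Qed.

Lemma clamp01_id z : 0 <= z <= 1 -> clamp01 z = z.
Proof. by rewrite /clamp01 /Rmin /Rmax; repeat destruct Rle_dec; lra. Qed.

Lemma clamp01_le z1 z2 : z1 <= z2 -> clamp01 z1 <= clamp01 z2.
Proof. by rewrite /clamp01 /Rmin /Rmax; repeat destruct Rle_dec; lra. Qed.

Lemma INR_ltn (i j : nat) : (i < j)%N -> INR i + 1 <= INR j.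
Proof. by move=> hij; rewrite -S_INR; apply: le_INR; apply/leP. Qed.

Section PolygonalPath.
Variable n : nat.

Definition psum (W : 'I_n -> R) (k : nat) : R :=
  \big[Rplus/0]_(j < n | (j < k)%N) W j.

(* The coordinate, at time [T], of the polygonal path whose [j]-th edge has
   coordinate [W j] and is traversed during the time interval [[j, j + 1]]. *)
Definition path_at (W : 'I_n -> R) (T : R) : R :=
  \big[Rplus/0]_(j < n) (clamp01 (T - INR j) * W j).

Lemma psum0 W : psum W 0 = 0.
Proof. by rewrite /psum big_pred0. Qed.

Lemma psumS W (i : 'I_n) : psum W i.+1 = psum W i + W i.
Proof.
rewrite /psum (bigD1 i) //= Rplus_comm; congr (_ + _).
by apply: eq_bigl => j; rewrite ltnS leq_eqVlt -val_eqE /=; case: ltngtP.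
Qed.

Lemma psum_ord W : psum W n = \big[Rplus/0]_(j < n) W j.
Proof. by apply: eq_bigl => j; rewrite ltn_ord. Qed.

Lemma path_at_psum W (i : 'I_n) l : 0 <= l <= 1 ->
  path_at W (INR i + l) = psum W i + l * W i.
Proof.
move=> hl; rewrite /path_at (bigD1 i) //= (_ : INR i + l - INR i = l); last ring.
rewrite clamp01_id // Rplus_comm /psum big_mkcond [in RHS]big_mkcond; congr (_ + _).
apply: eq_bigr => j _ /=; rewrite -val_eqE /=.
case: ltngtP => [/INR_ltn hj | /INR_ltn hj | _] /=.
- by rewrite clamp01_ge1 ?Rmult_1_l //; lra.
- by rewrite clamp01_le0 ?Rmult_0_l //; lra.
- by [].
Qed.

Lemma eq_path_at W1 W2 : W1 =1 W2 -> path_at W1 =1 path_at W2.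
Proof. by move=> eW T; apply: eq_bigr => j _; rewrite eW. Qed.

Lemma path_at_tperm W (a b : 'I_n) T : a != b ->
  path_at (W \o tperm a b) T =
  path_at W T + (clamp01 (T - INR b) - clamp01 (T - INR a)) * (W a - W b).
Proof.
move=> hab; apply: (Rplus_eq_reg_l (- path_at W T)).
rewrite [LHS]Rplus_comm -[_ + _]/(_ - _) /path_at (reindex_inj (@perm_inj _ (tperm a b))).
rewrite big_Rminus (bigD1 a) // (bigD1 b) /=; last by rewrite eq_sym.
rewrite big1 => [|j /andP [hjb hja]]; last by rewrite tpermK tpermD 1?eq_sym //; ring.
by rewrite !tpermK tpermL tpermR; ring.
Qed.

Section Transposition.
Variables (a b : 'I_n).
Hypothesis hab : (a < b)%N.

Let hab1 : INR a + 1 <= INR b := INR_ltn hab.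
Let hne : a != b. Proof. by rewrite neq_ltn hab. Qed.

Lemma path_at_tperm_out W T : T <= INR a \/ INR b + 1 <= T ->
  path_at (W \o tperm a b) T = path_at W T.
Proof.
rewrite path_at_tperm //.
by case=> hT; [rewrite !clamp01_le0 | rewrite !clamp01_ge1]; try lra; ring.
Qed.

Lemma path_at_tperm_first W l : 0 <= l <= 1 ->
  path_at (W \o tperm a b) (INR a + l) = psum W a + l * W b.
Proof.
move=> hl; rewrite path_at_tperm // path_at_psum // clamp01_le0; last lra.
by rewrite clamp01_id; [ring | lra].
Qed.

Lemma path_at_tperm_mid W T : INR a + 1 <= T <= INR b ->
  path_at (W \o tperm a b) T = path_at W T + (W b - W a).
Proof.
by move=> hT; rewrite path_at_tperm // clamp01_le0 ?clamp01_ge1; [ring | lra | lra].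
Qed.

Lemma path_at_tperm_last W l : 0 <= l <= 1 ->
  path_at (W \o tperm a b) (INR b + l) = psum W b + W b - (1 - l) * W a.
Proof.
move=> hl; rewrite path_at_tperm // path_at_psum // (@clamp01_ge1 (_ - INR a)); last lra.
by rewrite clamp01_id; [ring | lra].
Qed.

End Transposition.

Lemma path_at_lipschitz U H T1 T2 : (forall j, Rabs (U j) <= H j) ->
  Rabs (path_at U T1 - path_at U T2) <= Rabs (path_at H T1 - path_at H T2).
Proof.
move=> hUH.
wlog le12 : T1 T2 / T1 <= T2.
  move=> hw; case: (Rle_dec T1 T2) => h; first exact: hw.
  by rewrite Rabs_minus_sym [X in _ <= X]Rabs_minus_sym; apply: hw; lra.
rewrite Rabs_minus_sym [X in _ <= X]Rabs_minus_sym !big_Rminus.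
apply: Rle_trans (Rle_abs _); apply: Rabs_big_le => j _.
have hc := @clamp01_le (T1 - INR j) (T2 - INR j) ltac:(lra).
rewrite -!Rmult_minus_distr_r Rabs_mult Rabs_pos_eq; last lra.
by apply: Rmult_le_compat_l => //; lra.
Qed.

Lemma psum_segment W (i : 'I_n) y : 0 < W i ->
  psum W i <= y <= psum W i.+1 ->
  exists l, 0 <= l <= 1 /\ y = (1 - l) * psum W i + l * psum W i.+1.
Proof.
rewrite psumS => hWi hy; exists ((y - psum W i) / W i).
by split; [apply: Rdiv_in_unit; lra | field; lra].
Qed.

Lemma psum_reach W : (forall j, 0 < W j) -> forall k, (k < n)%N ->
  forall y, 0 <= y <= psum W k.+1 ->
  exists (i : 'I_n) l, 0 <= l <= 1 /\ y = (1 - l) * psum W i + l * psum W i.+1.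
Proof.
move=> hW k; elim: k => [|k IH] hk y hy.
  by exists (Ordinal hk); apply: psum_segment; rewrite /= ?psum0.
case: (Rle_dec y (psum W k.+1)) => hyk; first by apply: IH => //; [lia | lra].
by exists (Ordinal hk); apply: psum_segment => //=; lra.
Qed.

End PolygonalPath.

Definition in_right_cone (x0 y0 x y : R) : Prop := x0 + Rabs (y - y0) <= x.

Section EdgeSwap.
Variables ua ha ub hb : R.
Hypotheses (hua : Rabs ua <= ha) (hub : Rabs ub <= hb) (ha0 : 0 < ha) (hb0 : 0 < hb).
Hypotheses (cross : ua * hb <= ub * ha) (diff : hb - ub <= ha - ua)
  (sum : ua + ha <= ub + hb).

Lemma cone_first_edge l : 0 <= l <= 1 ->
  exists m, 0 <= m <= 1 /\ in_right_cone (m * ua) (m * ha) (l * ub) (l * hb).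
Proof.
move=> hl; rewrite /in_right_cone; have [hu1 hu2] := Rabs_le_between hub.
case: (Rle_dec (l * hb) ha) => hlh.
  exists (l * hb / ha); split; first by apply: Rdiv_in_unit; nra.
  have -> : l * hb - l * hb / ha * ha = 0 by field; lra.
  rewrite Rabs_R0 Rplus_0_r.
  have -> : l * hb / ha * ua = l / ha * (ua * hb) by field; lra.
  have -> : l * ub = l / ha * (ub * ha) by field; lra.
  by apply: Rmult_le_compat_l => //; apply: Rle_mult_inv_pos; lra.
exists 1; split; first lra.
by rewrite Rabs_pos_eq; nra.
Qed.

Lemma cone_last_edge m : 0 <= m <= 1 ->
  exists l, 0 <= l <= 1 /\ in_right_cone (m * ua) (m * ha) (l * ub) (l * hb).
Proof.
move=> hm; rewrite /in_right_cone; have [hu1 hu2] := Rabs_le_between hua.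
case: (Rle_dec (m * ha) hb) => hmh.
  exists (m * ha / hb); split; first by apply: Rdiv_in_unit; nra.
  have -> : m * ha / hb * hb - m * ha = 0 by field; lra.
  rewrite Rabs_R0 Rplus_0_r.
  have -> : m * ua = m / hb * (ua * hb) by field; lra.
  have -> : m * ha / hb * ub = m / hb * (ub * ha) by field; lra.
  by apply: Rmult_le_compat_l => //; apply: Rle_mult_inv_pos; lra.
exists 1; split; first lra.
by rewrite Rabs_left1; nra.
Qed.

Lemma cone_middle : in_right_cone 0 0 (ub - ua) (hb - ha).
Proof. by rewrite /in_right_cone Rminus_0_r; have := Rabs_le (hb - ha) (ub - ua); lra. Qed.

End EdgeSwap.

Lemma in_right_cone_refl x y : in_right_cone x y x y.
Proof. by rewrite /in_right_cone Rminus_diag Rabs_R0; lra. Qed.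

Lemma in_right_cone_translate p q x0 y0 x y : in_right_cone x0 y0 x y ->
  in_right_cone (p + x0) (q + y0) (p + x) (q + y).
Proof. by rewrite /in_right_cone (_ : q + y - (q + y0) = y - y0); [lra | ring]. Qed.

Lemma in_right_cone_reflect p q x0 y0 x y : in_right_cone x0 y0 x y ->
  in_right_cone (p - x) (q - y) (p - x0) (q - y0).
Proof.
by rewrite /in_right_cone (_ : q - y0 - (q - y) = y - y0); [lra | ring].
Qed.

Section PathSwap.
Variables (n : nat) (U H : 'I_n -> R) (a b : 'I_n).
Hypotheses (hUH : forall j, Rabs (U j) <= H j) (hH : forall j, 0 < H j).
Hypotheses (hab : (a < b)%N) (cross : U a * H b <= U b * H a)
  (diff : H b - U b <= H a - U a) (sum : U a + H a <= U b + H b).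

Lemma path_at_tperm_cone T' : exists T,
  in_right_cone (path_at U T) (path_at H T)
    (path_at (U \o tperm a b) T') (path_at (H \o tperm a b) T').
Proof.
have hab1 := INR_ltn hab.
case: (Rle_dec T' (INR a)) => hTa.
  by exists T'; rewrite !path_at_tperm_out //; [apply: in_right_cone_refl | left..].
case: (Rle_dec (INR b + 1) T') => hTb.
  by exists T'; rewrite !path_at_tperm_out //; [apply: in_right_cone_refl | right..].
case: (Rle_dec T' (INR a + 1)) => hTa1.
  have hl : 0 <= T' - INR a <= 1 by lra.
  have [m [hm hcone]] := cone_first_edge (hUH b) (hH a) cross diff hl.
  exists (INR a + m); rewrite -(Rplus_minus (INR a) T') !path_at_tperm_first //.
  by rewrite !path_at_psum //; apply: in_right_cone_translate.
case: (Rle_dec T' (INR b)) => hTb'.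
  exists T'; rewrite !path_at_tperm_mid //; try lra.
  have := in_right_cone_translate (path_at U T') (path_at H T') (cone_middle diff sum).
  by rewrite !Rplus_0_r.
have hl : 0 <= 1 - (T' - INR b) <= 1 by lra.
have [m [hm hcone]] := cone_last_edge (hUH a) (hH b) cross sum hl.
exists (INR b + (1 - m)); rewrite -(Rplus_minus (INR b) T') !path_at_tperm_last ?path_at_psum //; try lra.
have shift x y : x + (1 - m) * y = x + y - m * y by ring.
by rewrite !shift; apply: in_right_cone_reflect.
Qed.

End PathSwap.

Lemma path_at_le_of_cone n (U H U' H' : 'I_n -> R) :
  (forall j, Rabs (U j) <= H j) ->
  (forall T', exists T0, in_right_cone (path_at U T0) (path_at H T0)
                                       (path_at U' T') (path_at H' T')) ->
  forall T T', path_at H T = path_at H' T' -> path_at U T <= path_at U' T'.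
Proof.
move=> hUH hcone T T' eH; have [T0 hT0] := hcone T'.
have hlip := path_at_lipschitz T T0 hUH.
move: hT0; rewrite /in_right_cone -eH.
by have := Rle_abs (path_at U T - path_at U T0); lra.
Qed.

Section Borders.
Variables (n : nat) (alpha : R).
Hypotheses (hn : (2 <= n)%N) (ha1 : PI / 4 <= alpha) (ha2 : alpha < PI / 2).

Lemma INR_pred_gt0 : 0 < INR (n - 1).
Proof. by apply: lt_0_INR; apply/ltP; lia. Qed.

Lemma theta_le_mono k1 k2 : (k1 <= k2)%N -> theta n alpha k1 <= theta n alpha k2.
Proof.
move=> hk; have hN := INR_pred_gt0; have hPI := PI_RGT_0.
apply: Rplus_le_compat_r; apply: Rmult_le_compat_r; first by apply: Rlt_le; apply: Rinv_0_lt_compat.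
by apply: Rmult_le_compat_r; [lra | apply: le_INR; apply/leP].
Qed.

Lemma theta_range k : (k < n)%N -> PI / 4 <= theta n alpha k <= 3 * PI / 4.
Proof.
move=> hk; have hN := INR_pred_gt0.
have theta0 : theta n alpha 0 = alpha by rewrite /theta /=; field; lra.
have theta_last : theta n alpha (n - 1) = PI - alpha by rewrite /theta; field; lra.
have hk1 : (k <= n - 1)%N by lia.
have := theta_le_mono (leq0n k); have := theta_le_mono hk1.
by rewrite theta0 theta_last; lra.
Qed.

Definition edge_dx (s : {perm 'I_n}) (j : 'I_n) : R := fst (beta n alpha ((s^-1)%g j)).
Definition edge_dy (s : {perm 'I_n}) (j : 'I_n) : R := snd (beta n alpha ((s^-1)%g j)).

Lemma edge_dy_gt0 s j : 0 < edge_dy s j.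
Proof.
have := theta_range (ltn_ord ((s^-1)%g j)); have := PI_RGT_0.
by move=> hPI hr; apply: sin_gt_0; lra.
Qed.

Lemma abs_edge_dx_le s j : Rabs (edge_dx s j) <= edge_dy s j.
Proof.
by rewrite /edge_dx /edge_dy /= Rabs_Ropp; apply/abs_cos_le_sin/theta_range.
Qed.

Lemma edge_dx_mul_tperm s (a b : 'I_n) : edge_dx (s * tperm a b)%g =1 edge_dx s \o tperm a b.
Proof. by move=> j; rewrite /edge_dx invMg tpermV permM. Qed.

Lemma edge_dy_mul_tperm s (a b : 'I_n) : edge_dy (s * tperm a b)%g =1 edge_dy s \o tperm a b.
Proof. by move=> j; rewrite /edge_dy invMg tpermV permM. Qed.

Lemma bpt_psum s k : bpt n alpha s k = (psum (edge_dx s) k, psum (edge_dy s) k).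
Proof. by []. Qed.

Lemma on_border_path_at s x y : on_border n alpha s x y ->
  exists T, x = path_at (edge_dx s) T /\ y = path_at (edge_dy s) T.
Proof.
case=> i [l [hl [-> ->]]]; exists (INR i + l).
by rewrite !path_at_psum // !bpt_psum /= !psumS; split; ring.
Qed.

Lemma on_border_at s y : 0 <= y <= border_height n alpha ->
  exists x, on_border n alpha s x y.
Proof.
have -> : border_height n alpha = psum (edge_dy s) n.-1.+1.
  rewrite prednK; last lia.
  by rewrite psum_ord /border_height (reindex_inj (@perm_inj _ (s^-1)%g)).
case/(psum_reach (@edge_dy_gt0 s) (_ : n.-1 < n)%N); first lia.
by move=> i [l [hl ->]]; exists ((1 - l) * psum (edge_dx s) i + l * psum (edge_dx s) i.+1), i, l.
Qed.

Lemma border_prec_trans s1 s2 s3 :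
  border_prec n alpha s1 s2 -> border_prec n alpha s2 s3 -> border_prec n alpha s1 s3.
Proof.
move=> h12 h23 y hy x1 x3 hx1 hx3; have [x2 hx2] := on_border_at s2 hy.
by have := h12 y hy x1 x2 hx1 hx2; have := h23 y hy x2 x3 hx2 hx3; lra.
Qed.

Lemma border_prec_tperm (s : {perm 'I_n}) (a b : 'I_n) :
  (a < b)%N -> ((s^-1)%g a < (s^-1)%g b)%N ->
  border_prec n alpha s (s * tperm a b)%g.
Proof.
move=> hab hs y _ x1 x2 /on_border_path_at [T [-> ->]] /on_border_path_at [T' [-> eH]].
rewrite (eq_path_at (edge_dx_mul_tperm s a b)).
rewrite (eq_path_at (edge_dy_mul_tperm s a b)) in eH.
apply: (path_at_le_of_cone (@abs_edge_dx_le s) _ eH) => T''.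
have hA := theta_range (ltn_ord ((s^-1)%g a)).
have hB := theta_range (ltn_ord ((s^-1)%g b)).
have hAB := theta_le_mono (ltnW hs); have hPI := PI_RGT_0.
apply: path_at_tperm_cone => //; rewrite /edge_dx /edge_dy /=.
- exact: abs_edge_dx_le.
- exact: edge_dy_gt0.
- by apply: cos_sin_cross_le; lra.
- by have := sin_add_cos_decr (proj1 hA) hAB (proj2 hB); lra.
- by have := sin_sub_cos_incr (proj1 hA) hAB (proj2 hB); lra.
Qed.

End Borders.

Local Close Scope R_scope.

Lemma incr_bounded_id n (f : nat -> nat) :
  (forall k, (k.+1 < n)%N -> (f k < f k.+1)%N) -> (forall k, (k < n)%N -> (f k < n)%N) ->
  forall k, (k < n)%N -> f k = k.
Proof.
move=> hinc hb.
have up k : (k < n)%N -> (k <= f k)%N.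
  by elim: k => [|k IH] hk //; have := IH (ltnW hk); have := hinc k hk; lia.
have down d k : (k + d < n)%N -> (f k + d < n)%N.
  elim: d k => [|d IH] k hk; first by rewrite addn0; apply: hb; lia.
  by have := IH k.+1 ltac:(lia); have := hinc k ltac:(lia); lia.
by move=> k hk; have := up k hk; have := down (n - k.+1) k ltac:(lia); lia.
Qed.

Section Inversions.
Variable n : nat.
Local Open Scope group_scope.

Definition inversions (g : {perm 'I_n}) : {set 'I_n * 'I_n} :=
  [set pq : 'I_n * 'I_n | (pq.1 < pq.2)%N && (g pq.2 < g pq.1)%N].

Lemma inversions1 : inversions 1 = set0.
Proof. by apply/setP => -[p q]; rewrite !inE /= !perm1; case: ltngtP. Qed.

Lemma sym_gensP x :
  reflect (exists i j : 'I_n, j = i.+1 :> nat /\ x = tperm i j) (x \in sym_gens n).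
Proof.
rewrite inE; apply: (iffP existsP) => [[i /existsP [j /andP [/eqP hj /eqP ->]]]|].
  by exists i, j.
by case=> i [j [hj ->]]; exists i; apply/existsP; exists j; rewrite hj !eqxx.
Qed.

Lemma ord_neq_val (u v : 'I_n) : u <> v -> u <> v :> nat.
Proof. by move=> ne /val_inj. Qed.

Lemma ltn_tperm_adj (i j y z : 'I_n) : j = i.+1 :> nat ->
  (tperm i j z < tperm i j y)%N -> (z < y)%N \/ (y = i /\ z = j).
Proof.
move=> hj; case: tpermP => [->|->|/ord_neq_val ? /ord_neq_val ?];
  case: tpermP => [->|->|/ord_neq_val ? /ord_neq_val ?] h; by [right | left; lia].
Qed.

Lemma card_inversions_tperm_adj (g : {perm 'I_n}) (i j : 'I_n) : j = i.+1 :> nat ->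
  (#|inversions (g * tperm i j)| <= #|inversions g|.+1)%N.
Proof.
move=> hj; apply: (@leq_trans #|(g^-1 i, g^-1 j) |: inversions g|); last first.
  by rewrite cardsU1; case: (_ \notin _).
apply/subset_leq_card/subsetP => -[p q]; rewrite !inE /= !permM => /andP [hpq h].
case: (ltn_tperm_adj hj h) => [hlt | [<- <-]]; first by rewrite hpq hlt orbT.
by rewrite !permK eqxx.
Qed.

Lemma card_inversions_word s : word_over (sym_gens n) s ->
  (#|inversions (wprod s)^-1| <= size s)%N.
Proof.
elim: s => [|x s IH]; first by rewrite /wprod big_nil invg1 inversions1 cards0.
rewrite /word_over /= => /andP [/sym_gensP [i [j [hj ->]]] hs].
rewrite /wprod big_cons -/(wprod s) invMg tpermV.
by apply: leq_trans (card_inversions_tperm_adj _ hj) _; rewrite ltnS; apply: IH.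
Qed.

Lemma perm_adj_incr_eq1 (g : {perm 'I_n}) :
  (forall i j : 'I_n, j = i.+1 :> nat -> (g i < g j)%N) -> g = 1.
Proof.
case: n g => [|m] g hinc; apply/permP => k; first by case: k.
rewrite perm1; apply: val_inj; rewrite /= -[k in LHS]inord_val.
apply: (@incr_bounded_id m.+1 (fun k => g (inord k))) => // l hl.
by apply: hinc; rewrite /= !inordK //; lia.
Qed.

Lemma word_of_inversions (g : {perm 'I_n}) : exists s,
  [/\ word_over (sym_gens n) s, wprod s = g & (size s <= #|inversions g^-1|)%N].
Proof.
elim: {g}_.+1 {-2}g (ltnSn #|inversions g^-1|) => // k IH g hk.
case: (boolP [exists i : 'I_n, exists j : 'I_n, (j == i.+1 :> nat) && (g j < g i)%N]).
  case/existsP => i /existsP [j /andP [/eqP hj hdesc]]; set x := tperm i j.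
  have hproper : inversions (g^-1 * x) \proper inversions g^-1.
    apply/properP; split.
      apply/subsetP => -[p q]; rewrite !inE /= !permM => /andP [hpq h].
      case: (ltn_tperm_adj hj h) => [-> | [hq hp]]; first by rewrite hpq.
      by move: hpq hdesc; rewrite -hp -hq !permKV; lia.
    exists (g j, g i); rewrite !inE /= ?permM !permK hdesc ?hj ?ltnSn //=.
    by rewrite /x tpermL tpermR; lia.
  have hfewer : (#|inversions (x * g)^-1| < #|inversions g^-1|)%N.
    by rewrite invMg tpermV; apply: proper_card.
  have [s [hs hws hsz]] := IH (x * g) (leq_trans hfewer hk).
  exists (x :: s); split.
  - by move: hs; rewrite /word_over /= => ->; rewrite andbT; apply/sym_gensP; exists i, j.
  - by rewrite /wprod big_cons -/(wprod s) hws mulgA tperm2 mul1g.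
  - exact: leq_ltn_trans hsz hfewer.
move/existsPn => hno; exists [::]; split => //.
rewrite /wprod big_nil; apply/esym/perm_adj_incr_eq1 => i j hj.
move/existsPn: (hno i) => /(_ j); rewrite hj eqxx /= -leqNgt leq_eqVlt.
by case/orP => // /eqP/val_inj/perm_inj eij; move: hj; rewrite eij; lia.
Qed.

Lemma card_inversions_tperm_mul (g : {perm 'I_n}) (a b : 'I_n) : (a < b)%N -> (g b < g a)%N ->
  (#|inversions (tperm a b * g)| <= #|inversions g|)%N.
Proof.
move=> hab hg; set t := tperm a b.
pose f (pq : 'I_n * 'I_n) := if (t pq.1 < t pq.2)%N then (t pq.1, t pq.2) else pq.
rewrite -(card_in_imset (f := f)).
  apply/subset_leq_card/subsetP => _ /imsetP [[p q] hpq ->].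
  move: hpq; rewrite /f !inE /= !permM => /andP [hpq h].
  case: ifP => hc /=; first by rewrite hc h.
  rewrite hpq /=; move: hpq hc h; rewrite /t.
  by case: tpermP => [->|->|/ord_neq_val ? /ord_neq_val ?];
    case: tpermP => [->|->|/ord_neq_val ? /ord_neq_val ?]; lia.
move=> [p q] [p' q']; rewrite !inE /= !permM /f /= => /andP [hpq _] /andP [hpq' _].
case: ifP => h1; case: ifP => h2 //.
- by case=> /perm_inj -> /perm_inj ->.
- by case=> e1 e2; move: h2; rewrite -e1 -e2 /t !tpermK hpq.
- by case=> e1 e2; move: h1; rewrite e1 e2 /t !tpermK hpq'.
Qed.

Lemma cox_len_sym g k : cox_len (sym_gens n) g k -> k = #|inversions g^-1|.
Proof.
case=> [[s [hs <- <-]] hmin]; apply/eqP; rewrite eqn_leq card_inversions_word // andbT.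
by have [r [hr hwr hsz]] := word_of_inversions (wprod s); apply: leq_trans (hmin r hr hwr) hsz.
Qed.

Lemma sym_reflectionP t : t \in reflections [set: {perm 'I_n}] (sym_gens n) ->
  exists a b : 'I_n, (a < b)%N /\ t = tperm a b.
Proof.
case/imset2P => _ w /sym_gensP [i [j [hj ->]]] _ ->; rewrite tpermJ.
case: (ltngtP (w i) (w j)) => [hlt | hgt | /val_inj/perm_inj eij].
- by exists (w i), (w j).
- by exists (w j), (w i); rewrite tpermC.
- by move: hj; rewrite eij; lia.
Qed.

Lemma sym_bruhat_stepP (sg tau : {perm 'I_n}) :
  bruhat_step [set: {perm 'I_n}] (sym_gens n) sg tau ->
  exists a b : 'I_n, [/\ (a < b)%N, (sg^-1 a < sg^-1 b)%N & tau = sg * tperm a b].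
Proof.
case=> t /sym_reflectionP [a [b [hab ->]]] [-> [k [/cox_len_sym hk /cox_len_sym hk1]]].
exists a, b; split => //; case: ltngtP => // [hgt | /val_inj/perm_inj eab].
  by have := card_inversions_tperm_mul hab hgt; rewrite -tpermV -invMg -hk1 -hk ltnn.
by move: hab; rewrite eab ltnn.
Qed.

End Inversions.

Lemma border_prec_of_sym_bruhat n (alpha : R) :
  (2 <= n)%N -> Rle (PI / 4) alpha -> Rlt alpha (PI / 2) ->
  forall x y : {perm 'I_n}, sym_bruhat_lt x y -> border_prec n alpha x y.
Proof.
move=> hn ha1 ha2 x y; elim=> [u v /sym_bruhat_stepP [a [b [hab hu ->]]] | u v z _ huv _ hvz].
  exact: border_prec_tperm.
exact: border_prec_trans huv hvz.
Qed.

Section ReducedWords.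
Variables (gT : finGroupType) (S : {set gT}).

Lemma word_over_cat (s1 s2 : seq gT) : word_over S (s1 ++ s2) = word_over S s1 && word_over S s2.
Proof. exact: all_cat. Qed.

Lemma wprod_cat (s1 s2 : seq gT) : wprod (s1 ++ s2) = (wprod s1 * wprod s2)%g.
Proof. exact: big_cat. Qed.

Lemma wprod_mem (W : {group gT}) s : S \subset W -> word_over S s -> wprod s \in W.
Proof.
move=> hSW hs; rewrite /wprod big_seq; apply: group_prod => x hx.
exact/(subsetP hSW)/(allP hs).
Qed.

Lemma cox_len_take s w k : reduced_expr S s w -> (k <= size s)%N ->
  cox_len S (wprod (take k s)) k.
Proof.
case=> hs hw [_ hmin] hk; rewrite -[s](cat_take_drop k) word_over_cat in hs.
case/andP: hs => htake hdrop.
split; first by exists (take k s); rewrite size_takel.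
move=> r hr hwr; have := hmin (r ++ drop k s).
rewrite word_over_cat hr hdrop wprod_cat hwr -wprod_cat cat_take_drop hw size_cat size_drop.
by move=> /(_ isT erefl); lia.
Qed.

Lemma weak_step_take s w i : reduced_expr S s w -> (i < size s)%N ->
  weak_step S (wprod (take i s)) (wprod (take i.+1 s)).
Proof.
move=> hred hi; have [hs _ _] := hred.
exists (nth 1%g s i); first exact/(allP hs)/mem_nth.
split; first by rewrite (take_nth 1%g hi) -cats1 wprod_cat /wprod big_seq1.
by exists i; split; apply: cox_len_take hred _; rewrite // ltnW.
Qed.

End ReducedWords.

Unset Implicit Arguments.

Theorem theorem1p1 (gT : finGroupType) (W : {group gT}) (S : {set gT}) (n : nat)
    (phi : {morphism W >-> {perm 'I_n}}) (alpha : R) :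
  coxeter_system W S -> (2 <= n)%N -> E_embedding S phi ->
  Rle (PI / 4) alpha -> Rlt alpha (PI / 2) ->
  forall (w : gT) (s : seq gT), w \in W -> reduced_expr S s w ->
  forall i : nat, (i < size s)%N ->
    border_prec n alpha (phi (wprod (take i s))) (phi (wprod (take i.+1 s))).
Proof.
move=> [hSW _ _ _] hn [_ hE] ha1 ha2 w s _ hred i hi.
have [hs _ _] := hred.
have take_mem k : wprod (take k s) \in W.
  by apply: wprod_mem hSW _; apply/allP => x /mem_take; apply: (allP hs).
apply: border_prec_of_sym_bruhat => //; apply: hE => //.
by apply: t_step; apply: weak_step_take hred hi.
Qed.
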